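(* Let $V$ be a vector space over $\mathbb{F}_2$ of finite dimension $n>1$, let $e=(e_i)_{i=1}^n$ be a basis of $V$, set $e_0=\sum_{i=1}^n e_i$ and \[ \xi_e=n+1+\sum_{i=0}^n X^{e_i}\in\mathbb{F}_2[V]. \] Then $\xi_e\in I^2[V]$ and $\mathrm{Pf}_2(\xi_e)=n-1$.
   Context: $\mathbb{F}_2[V]$ is the group algebra of $V$, elements $\sum_{v\in V}\alpha_vX^v$, $X^0=1$, $X^uX^v=X^{u+v}$; integers denote multiples of $1$ in $\mathbb{F}_2$. $I[V]$ is the kernel of the augmentation map $\sum\alpha_vX^v\mapsto\sum\alpha_v$, and $I^2[V]$ its square. A $2$-fold Pfister element is a product $(1+X^{u})(1+X^{v})$ with $u,v\in V$. For $\xi\in I^2[V]$, $\mathrm{Pf}_2(\xi)$ is the minimal number of terms in an expression of $\xi$ as a sum of $2$-fold Pfister elements. *)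

From HB Require Import structures.
From mathcomp Require Import all_boot all_order all_algebra.
Set Implicit Arguments. Unset Strict Implicit. Unset Printing Implicit Defensive.
Import GRing.Theory.
Local Open Scope ring_scope.

Notation V n := 'rV['F_2]_n.

(* The group algebra F_2[V]: elements sum_v alpha_v X^v, represented by the
   coefficient function v |-> alpha_v.  Addition is the (pointwise) zmodType
   addition of finite functions; multiplication is convolution [gmul] below
   (NOT the pointwise product of {ffun _ -> _}). *)
Definition GA (n : nat) := {ffun V n -> 'F_2}.

Definition gX (n : nat) (v : V n) : GA n := [ffun w => (w == v)%:R].

Definition gone (n : nat) : GA n := gX 0.

Definition gnat (n : nat) (k : nat) : GA n := (gone n) *+ k.

(* Multiplication in the group algebra: X^u X^v = X^(u+v), extended bilinearly. *)
Definition gmul (n : nat) (f g : GA n) : GA n :=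
  [ffun w => \sum_(u : V n) f u * g (w - u)].

Definition aug (n : nat) (f : GA n) : 'F_2 := \sum_(v : V n) f v.

Definition inI (n : nat) (f : GA n) : Prop := aug f = 0.

Definition inI2 (n : nat) (xi : GA n) : Prop :=
  exists s : seq (GA n * GA n),
    (forall p, p \in s -> inI p.1 /\ inI p.2) /\
    xi = \sum_(p <- s) gmul p.1 p.2.

Definition pfister2 (n : nat) (u v : V n) : GA n :=
  gmul (gone n + gX u) (gone n + gX v).

Definition pfsum (n : nat) (s : seq (V n * V n)) : GA n :=
  \sum_(p <- s) pfister2 p.1 p.2.

Definition Pf2_is (n : nat) (xi : GA n) (k : nat) : Prop :=
  (exists s : seq (V n * V n), size s = k /\ pfsum s = xi) /\
  (forall s : seq (V n * V n), pfsum s = xi -> (k <= size s)%N).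

(* Given a basis e_1..e_n (the rows of E), e_0 = sum_i e_i and
   xi_e = (n+1) + sum_{i=0}^n X^{e_i}. *)
Definition e0 (n : nat) (E : 'M['F_2]_n) : V n := \sum_(i < n) row i E.

Definition xi_e (n : nat) (E : 'M['F_2]_n) : GA n :=
  gnat n n.+1 + gX (e0 E) + \sum_(i < n) gX (row i E).

From mathcomp Require Import all_boot all_order all_algebra zify.
Set Implicit Arguments. Unset Strict Implicit. Unset Printing Implicit Defensive.
Import GRing.Theory.
Local Open Scope ring_scope.

(* Push-forward along an invertible matrix is a change of basis that maps Pfister
   sums to Pfister sums of the same length, so Pf_2 is invariant and we may take
   [e] to be the standard basis; then [xi_e] is [xi_set setT], where
   [xi_set S] = sum_(i in S) (1 + X^e_i) + (1 + X^e_S) and e_S = sum_(i in S) e_i.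
   Upper bound: adding (1 + X^e_T)(1 + X^e_j) to [xi_set T] gives [xi_set (j |: T)].
   Lower bound: X^e_j has coefficient 1 in [xi_set S], so some summand of any
   expansion has e_j in its support; the coordinate projection killing e_j kills
   that summand and maps [xi_set S] to [xi_set (S :\ j)], and we induct on |S|. *)

Lemma addrr_F2 (x : 'F_2) : x + x = 0.
Proof. exact/addrr_pchar2/pchar_Fp. Qed.

Lemma addrr_GA n (f : GA n) : f + f = 0.
Proof. by apply/ffunP => w; rewrite !ffunE addrr_F2. Qed.

Lemma addrr_V n (v : V n) : v + v = 0.
Proof. by apply/matrixP => i j; rewrite !mxE addrr_F2. Qed.

Lemma oppr_V n (v : V n) : - v = v.
Proof. by apply/esym/eqP; rewrite -addr_eq0 addrr_V. Qed.

Section GroupAlgebra.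
Variable n : nat.
Implicit Types (f g h : GA n) (u v w : V n) (s : seq (V n * V n)).

Lemma gXE v w : gX v w = (w == v)%:R.
Proof. by rewrite ffunE. Qed.

Lemma gmulDl f g h : gmul (f + g) h = gmul f h + gmul g h.
Proof.
apply/ffunP => w; rewrite !ffunE -big_split; apply: eq_bigr => u _.
by rewrite ffunE mulrDl.
Qed.

Lemma gmulDr f g h : gmul f (g + h) = gmul f g + gmul f h.
Proof.
apply/ffunP => w; rewrite !ffunE -big_split; apply: eq_bigr => u _.
by rewrite ffunE mulrDr.
Qed.

Lemma gmul_gX u v : gmul (gX u) (gX v) = gX (u + v).
Proof.
apply/ffunP => w; rewrite !ffunE (bigD1 u) //= big1 => [|x /negbTE neq_xu].
  by rewrite !gXE eqxx mul1r addr0 subr_eq addrC.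
by rewrite gXE neq_xu mul0r.
Qed.

Definition pfister1 v : GA n := gone n + gX v.

Lemma pfister1_0 : pfister1 0 = 0.
Proof. exact: addrr_GA. Qed.

Lemma pfister1E_neq0 v w : w != 0 -> pfister1 v w = (w == v)%:R.
Proof. by move=> /negbTE nz_w; rewrite !ffunE nz_w add0r. Qed.

(* Over F_2 the three constant terms of the right-hand side add up to 1. *)
Lemma pfister2E u v : pfister2 u v = pfister1 u + pfister1 v + pfister1 (u + v).
Proof.
rewrite /pfister2 /pfister1 /gone gmulDl !gmulDr !gmul_gX !add0r addr0.
rewrite [gX 0 + gX u + _]addrACA addrr_GA add0r.
by rewrite addrACA [RHS]addrACA [gX 0 + gX u]addrC.
Qed.

Lemma pfister2_eq0 u v : [|| u == 0, v == 0 | u == v] -> pfister2 u v = 0.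
Proof.
rewrite pfister2E; case/or3P => /eqP->.
- by rewrite add0r pfister1_0 add0r addrr_GA.
- by rewrite addr0 pfister1_0 addr0 addrr_GA.
- by rewrite addrr_V pfister1_0 addr0 addrr_GA.
Qed.

Lemma pfister2_supp u v w :
  w != 0 -> pfister2 u v w != 0 -> [|| w == u, w == v | w == u + v].
Proof.
move=> /negbTE nz_w; rewrite pfister2E !ffunE nz_w !add0r.
by case: (w == u); case: (w == v); case: (w == u + v); rewrite ?addr0 ?eqxx.
Qed.

Lemma pfister1_inI v : inI (pfister1 v).
Proof.
have aug_gX w : aug (gX w) = 1.
  rewrite /aug (bigD1 w) //= big1 => [|y /negbTE neq_yw]; last by rewrite gXE neq_yw.
  by rewrite gXE eqxx addr0.
have augD f g : aug (f + g) = aug f + aug g.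
  by rewrite /aug -big_split; apply: eq_bigr => x _; rewrite ffunE.
by rewrite /inI /pfister1 /gone augD !aug_gX addrr_F2.
Qed.

Lemma pfsum_inI2 s : inI2 (pfsum s).
Proof.
exists [seq (pfister1 p.1, pfister1 p.2) | p <- s]; split.
  by move=> _ /mapP[p _ ->]; split; apply: pfister1_inI.
by rewrite /pfsum big_map.
Qed.

End GroupAlgebra.

Definition push n m (M : 'M['F_2]_(n, m)) (f : GA n) : GA m :=
  [ffun w => \sum_(v | v *m M == w) f v].

Section Push.
Variables n m : nat.
Variable M : 'M['F_2]_(n, m).
Implicit Types (f g : GA n) (u v w : V n) (s : seq (V n * V n)).

Lemma push0 : push M 0 = 0.
Proof. by apply/ffunP => w; rewrite !ffunE big1 // => v _; rewrite ffunE. Qed.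

Lemma pushD : {morph push M : f g / f + g}.
Proof.
move=> f g; apply/ffunP => w; rewrite !ffunE -big_split.
by apply: eq_bigr => v _; rewrite ffunE.
Qed.

Lemma push_gX v : push M (gX v) = gX (v *m M).
Proof.
apply/ffunP => w; rewrite !ffunE.
have [<-|neq_vMw] := eqVneq (v *m M) w.
  rewrite (bigD1 v) //= big1 => [|u /andP[_ /negbTE neq_uv]]; last by rewrite gXE neq_uv.
  by rewrite gXE eqxx addr0.
rewrite big1 // => u uMw; rewrite gXE; case: eqP => // eq_uv.
by move: neq_vMw; rewrite -eq_uv uMw.
Qed.

Lemma push_pfister1 v : push M (pfister1 v) = pfister1 (v *m M).
Proof. by rewrite /pfister1 pushD /gone !push_gX mul0mx. Qed.

Lemma push_pfister2 u v : push M (pfister2 u v) = pfister2 (u *m M) (v *m M).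
Proof. by rewrite !pfister2E 2!pushD !push_pfister1 mulmxDl. Qed.

Lemma push_pfsum s :
  push M (pfsum s) = pfsum [seq (p.1 *m M, p.2 *m M) | p <- s].
Proof.
rewrite /pfsum (big_morph _ pushD push0) big_map.
by apply: eq_bigr => p _; rewrite push_pfister2.
Qed.

(* A Pfister summand that is nonzero at [w] contains [w] in its support, so it is
   killed by any [M] with [w] in its kernel. *)
Lemma push_pfsum_drop w s : w != 0 -> w *m M = 0 -> pfsum s w != 0 ->
  exists2 t, size t = (size s).-1 & pfsum t = push M (pfsum s).
Proof.
move=> nz_w wM0 nz_sw.
have /hasP[p s_p nz_pw] : has (fun p => pfister2 p.1 p.2 w != 0) s.
  apply: contraR nz_sw => /hasPn s_w0; rewrite /pfsum sum_ffunE big1_seq //.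
  by move=> p /andP[_ /s_w0 /negPn/eqP].
exists [seq (q.1 *m M, q.2 *m M) | q <- rem p s]; first by rewrite size_map size_rem.
rewrite -push_pfsum /pfsum (perm_big _ (perm_to_rem s_p)) big_cons pushD.
rewrite push_pfister2 pfister2_eq0 ?add0r //.
case/or3P: (pfister2_supp nz_w nz_pw) => /eqP w_eq.
- by rewrite -w_eq wM0 eqxx.
- by rewrite -w_eq wM0 eqxx orbT.
- apply/or3P/Or33; move: wM0; rewrite w_eq mulmxDl => /eqP.
  by rewrite addr_eq0 oppr_V.
Qed.

End Push.

Lemma push_comp n m k (M : 'M['F_2]_(n, m)) (N : 'M['F_2]_(m, k)) f :
  push N (push M f) = push (M *m N) f.
Proof.
apply/ffunP => w; rewrite !ffunE.
rewrite [RHS](partition_big (fun u => u *m M) (fun v => v *m N == w)) => [|u]; last first.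
  by rewrite mulmxA.
apply: eq_bigr => v vNw; rewrite ffunE; apply: eq_bigl => u.
by rewrite mulmxA; case: eqP => [->|_]; rewrite ?vNw ?andbF.
Qed.

Lemma push1 n (f : GA n) : push 1%:M f = f.
Proof.
apply/ffunP => w; rewrite ffunE.
by under eq_bigl do rewrite mulmx1; rewrite big_pred1_eq.
Qed.

Lemma Pf2_is_push n (M : 'M['F_2]_n) xi k :
  M \in unitmx -> Pf2_is xi k -> Pf2_is (push M xi) k.
Proof.
move=> unitM [[s [size_s xi_s]] min_xi]; split.
  by exists [seq (p.1 *m M, p.2 *m M) | p <- s]; rewrite size_map -push_pfsum xi_s.
move=> t xi_t; rewrite -(size_map (fun p => (p.1 *m invmx M, p.2 *m invmx M))).
by apply: min_xi; rewrite -push_pfsum xi_t push_comp mulmxV // push1.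
Qed.

Section CharacteristicVectors.
Variable n : nat.
Implicit Types (S T : {set 'I_n}) (s : seq (V n * V n)).

Definition charvec S : V n := \row_k (k \in S)%:R.

Lemma charvec0 : charvec set0 = 0.
Proof. by apply/matrixP => i k; rewrite !mxE in_set0. Qed.

Lemma charvec_inj : injective charvec.
Proof.
move=> S T /matrixP eq_ST; apply/setP => k; have := eq_ST 0 k; rewrite !mxE.
by case: (k \in S); case: (k \in T).
Qed.

Lemma charvec1_neq0 j : charvec [set j] != 0.
Proof. by rewrite -charvec0 (inj_eq charvec_inj) -card_gt0 cards1. Qed.

Lemma charvecU1 j T : j \notin T -> charvec (j |: T) = charvec T + charvec [set j].
Proof.
move=> jNT; apply/matrixP => i k; rewrite !mxE !inE.
by case: eqP => [->|_]; rewrite ?(negbTE jNT) ?orbF ?add0r ?addr0.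
Qed.

Lemma charvec_mul_diag S T : charvec S *m diag_mx (charvec T) = charvec (S :&: T).
Proof.
by apply/matrixP => i k; rewrite mul_mx_diag !mxE inE; case: (k \in S); rewrite ?mul1r ?mul0r.
Qed.

Definition xi_set S : GA n :=
  \sum_(i in S) pfister1 (charvec [set i]) + pfister1 (charvec S).

Lemma xi_set0 : xi_set set0 = 0.
Proof. by rewrite /xi_set big_set0 charvec0 pfister1_0 addr0. Qed.

Lemma xi_setU1 j T : j \notin T ->
  xi_set (j |: T) = xi_set T + pfister2 (charvec T) (charvec [set j]).
Proof.
move=> jNT; rewrite /xi_set big_setU1 //= pfister2E -charvecU1 //.
move: (\sum_(i in T) _) (pfister1 _) (pfister1 (charvec T)) (pfister1 (charvec (j |: T))).
move=> B a d c.
by rewrite -!addrA [X in _ = _ + X]addrA addrr_GA add0r addrCA.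
Qed.

Lemma xi_set_charvec1 j S : j \in S -> (1 < #|S|)%N -> xi_set S (charvec [set j]) = 1.
Proof.
move=> jS S_gt1; have nz_j := charvec1_neq0 j.
rewrite ffunE sum_ffunE (bigD1 j) //= big1 => [|i /andP[_ neq_ij]]; last first.
  by rewrite pfister1E_neq0 // (inj_eq charvec_inj) (inj_eq set1_inj) eq_sym (negbTE neq_ij).
rewrite !pfister1E_neq0 // !(inj_eq charvec_inj) eqxx addr0.
have -> : ([set j] == S) = false by apply: contraTF S_gt1 => /eqP <-; rewrite cards1.
by rewrite addr0.
Qed.

Lemma push_xi_set S T : push (diag_mx (charvec T)) (xi_set S) = xi_set (S :&: T).
Proof.
rewrite /xi_set pushD (big_morph _ (pushD _) (push0 _)) push_pfister1 charvec_mul_diag.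
congr (_ + _); rewrite (big_setID T) /= [X in _ + X]big1 ?addr0 => [|i /setDP[_ iNT]].
  apply: eq_bigr => i /setIP[_ iT].
  by rewrite push_pfister1 charvec_mul_diag (setIidPl _) ?sub1set.
rewrite push_pfister1 charvec_mul_diag.
have -> : [set i] :&: T = set0.
  by apply/setP => k; rewrite !inE; case: eqP => // ->; rewrite (negbTE iNT).
by rewrite charvec0 pfister1_0.
Qed.

Lemma xi_set_pfsum S : exists2 s, size s = #|S|.-1 & pfsum s = xi_set S.
Proof.
have [k] := ubnP #|S|; elim: k S => // k IHk S S_lt.
have [->|[j jS]] := set_0Vmem S.
  by exists [::]; rewrite ?cards0 // xi_set0 /pfsum big_nil.
have T_lt : (#|S :\ j| < k)%N by move: S_lt; rewrite (cardsD1 j S) jS.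
rewrite -(setD1K jS) xi_setU1 ?setD11 // cardsU1 setD11.
have [->|nz_T] := eqVneq (S :\ j) set0.
  by exists [::]; rewrite ?cards0 // charvec0 pfister2_eq0 ?eqxx // xi_set0 addr0 /pfsum big_nil.
have [s size_s xi_s] := IHk _ T_lt.
exists ((charvec (S :\ j), charvec [set j]) :: s).
  by rewrite /= size_s prednK ?card_gt0.
by rewrite /pfsum big_cons -/(pfsum s) xi_s addrC.
Qed.

Lemma xi_set_Pf2_lb S s : pfsum s = xi_set S -> (#|S|.-1 <= size s)%N.
Proof.
have [k] := ubnP #|S|; elim: k S s => // k IHk S s S_lt xi_s.
have [S_le1|S_gt1] := leqP #|S| 1; first by move: S_le1; case: #|S| => [|[]].
have [j jS] : exists j, j \in S by apply/set0Pn; rewrite -card_gt0 ltnW.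
have nz_sj : pfsum s (charvec [set j]) != 0.
  by rewrite xi_s xi_set_charvec1 ?oner_neq0.
have s_gt0 : (0 < size s)%N.
  by case: s {xi_s} nz_sj => //; rewrite /pfsum big_nil ffunE eqxx.
have kill_j : charvec [set j] *m diag_mx (charvec [set~ j]) = 0.
  by rewrite charvec_mul_diag setICr charvec0.
have [t size_t xi_t] := push_pfsum_drop (charvec1_neq0 j) kill_j nz_sj.
rewrite xi_s push_xi_set -setDE in xi_t.
have T_lt : (#|S :\ j| < k)%N by move: S_lt; rewrite (cardsD1 j S) jS.
have := IHk _ _ T_lt xi_t; rewrite size_t (cardsD1 j S) jS.
move: S_gt1; rewrite (cardsD1 j S) jS; lia.
Qed.

Lemma Pf2_is_xi_set S : Pf2_is (xi_set S) #|S|.-1.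
Proof.
split; last exact: xi_set_Pf2_lb.
by have [s size_s xi_s] := xi_set_pfsum S; exists s.
Qed.

End CharacteristicVectors.

Lemma xi_eE n (E : 'M['F_2]_n) :
  xi_e E = \sum_(i < n) pfister1 (row i E) + pfister1 (e0 E).
Proof.
rewrite /xi_e /gnat /pfister1 big_split /= sumr_const card_ord mulrSr.
move: (gone n) (gX (e0 E)) (\sum_(i < n) _) => a b c.
by rewrite -!addrA; congr (_ + _); rewrite addrA addrC.
Qed.

Lemma push_xi_e n (E M : 'M['F_2]_n) : push M (xi_e E) = xi_e (E *m M).
Proof.
rewrite !xi_eE pushD (big_morph _ (pushD _) (push0 _)) push_pfister1.
rewrite /e0 mulmx_suml; congr (_ + pfister1 _); apply: eq_big => // i _.
  by rewrite push_pfister1 row_mul.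
by rewrite row_mul.
Qed.

Lemma xi_e1 n : xi_e (1%:M : 'M['F_2]_n) = xi_set [set: 'I_n].
Proof.
have row1_charvec i : row i 1%:M = charvec [set i].
  by apply/matrixP => ? k; rewrite !mxE inE eq_sym.
rewrite xi_eE /xi_set (eq_bigl _ _ (@in_setT _)); congr (_ + pfister1 _).
  by apply: eq_big => // i _; rewrite row1_charvec.
apply/matrixP => ? k; rewrite summxE !mxE inE (bigD1 k) //= big1 => [|i neq_ik].
  by rewrite row1_charvec mxE inE eqxx addr0.
by rewrite row1_charvec mxE inE eq_sym (negbTE neq_ik).
Qed.

Theorem proposition1p4 (n : nat) (E : 'M['F_2]_n) :
  (1 < n)%N -> E \in unitmx ->
  inI2 (xi_e E) /\ Pf2_is (xi_e E) n.-1.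
Proof.
move=> _ unitE.
have xiE : xi_e E = push E (xi_set [set: 'I_n]) by rewrite -xi_e1 push_xi_e mul1mx.
have Pf_xiE : Pf2_is (xi_e E) n.-1.
  by rewrite xiE -[n in n.-1]card_ord -cardsT; apply/Pf2_is_push/Pf2_is_xi_set.
split=> //; have [[s [_ <-]] _] := Pf_xiE; exact: pfsum_inI2.
Qed.
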